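(* Let $G_A$ be as in the context, let $p\ne q\in\mathbb{R}^n\cong\partial G_A\setminus\{\xi_0\}$ and suppose $D_e(p,q)=e^{t_0}$. Let $t_1,t_2\in\mathbb{R}$ and let $d$ be the Riemannian distance on $G_A$. Then: (1) if $t_1,t_2<t_0$, then $|d((p,t_1),(q,t_2))-(t_0-t_1)-(t_0-t_2)|\le C$, where $C$ depends only on $\alpha_1$ and $\alpha_r$; (2) if $t_1\ge t_0$ or $t_2\ge t_0$, then $|t_1-t_2|\le d((p,t_1),(q,t_2))\le|t_1-t_2|+1$.
   Context: Let $n_1,\dots,n_r\ge1$, $n=\sum n_i$, $0<\alpha_1<\dots<\alpha_r$, $A=\mathrm{diag}(\alpha_1I_{n_1},\dots,\alpha_rI_{n_r})$. $G_A$ is $\mathbb{R}^n\times\mathbb{R}$ with product $(x,t)(y,s)=(x+e^{tA}y,t+s)$ and the left-invariant Riemannian metric which at $(x,t)$ is $\begin{pmatrix}e^{-2tA}&0\\0&1\end{pmatrix}$; it is Gromov hyperbolic with ideal boundary $\partial G_A$. Vertical geodesics $\gamma_x(t)=(x,t)$ are asymptotic as $t\to+\infty$, defining $\xi_0\in\partial G_A$; $\partial G_A\setminus\{\xi_0\}$ is identified with $\mathbb{R}^n$, $x$ corresponding to the endpoint of $\gamma_x$ as $t\to-\infty$. For $p\ne q\in\mathbb{R}^n$, $D_e(p,q)=e^t$ where $t$ is the unique real number with $|e^{-tA}(p-q)|=1$ ($|\cdot|$ Euclidean). *)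

From Stdlib Require Import Reals List Lra.
From Coquelicot Require Import Coquelicot.
Open Scope R_scope.

Fixpoint sumk (n : nat) (f : nat -> R) : R :=
  match n with
  | O => 0
  | S m => sumk m f + f m
  end.

(* Block data: ns = [n_1; ...; n_r], als = [alpha_1; ...; alpha_r]. *)
Definition dimn (ns : list nat) : nat := fold_right Nat.add 0%nat ns.

(* Diagonal entry of A = diag(alpha_1 I_{n_1}, ..., alpha_r I_{n_r})
   in coordinate k (0-based). *)
Fixpoint wt (ns : list nat) (als : list R) (k : nat) : R :=
  match ns, als with
  | n0 :: ns', a :: als' => if Nat.ltb k n0 then a else wt ns' als' (k - n0)
  | _, _ => 0
  end.

Fixpoint strictly_increasing (l : list R) : Prop :=
  match l with
  | a :: ((b :: _) as l') => a < b /\ strictly_increasing l'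
  | _ => True
  end.

Definition valid_data (ns : list nat) (als : list R) : Prop :=
  (1 <= length ns)%nat /\ length ns = length als /\
  List.Forall (fun m => (1 <= m)%nat) ns /\
  List.Forall (fun a => 0 < a) als /\ strictly_increasing als.

(* Points of R^n are functions nat -> R, only coordinates k < n matter. *)
Definition ptR := nat -> R.

Definition normA (ns : list nat) (als : list R) (t : R) (v : ptR) : R :=
  sqrt (sumk (dimn ns) (fun k => (exp (- t * wt ns als k) * v k) ^ 2)).

(* D_e(p,q) = e^{t0}  iff  |e^{-t0 A}(p-q)| = 1 *)
Definition De_is (ns : list nat) (als : list R) (p q : ptR) (t0 : R) : Prop :=
  normA ns als t0 (fun k => p k - q k) = 1.

(* A C^1 real function (defined on all of R; every C^1 curve on [0,1]
   extends to such a function). *)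
Definition C1 (f : R -> R) : Prop :=
  forall s, ex_derive f s /\ continuous (Derive f) s.

(* A C^1 curve s |-> (x s, tt s) in G_A = R^n x R, parameter s in [0,1]. *)
Definition C1_curve (n : nat) (x : nat -> R -> R) (tt : R -> R) : Prop :=
  (forall k, (k < n)%nat -> C1 (x k)) /\ C1 tt.

(* Riemannian length for the metric diag(e^{-2tA}, 1) at (x,t). *)
Definition curve_length (ns : list nat) (als : list R)
    (x : nat -> R -> R) (tt : R -> R) : R :=
  RInt (fun s => sqrt (sumk (dimn ns)
           (fun k => (exp (- tt s * wt ns als k) * Derive (x k) s) ^ 2)
         + (Derive tt s) ^ 2)) 0 1.

Definition dist_GA (ns : list nat) (als : list R)
    (p : ptR) (t1 : R) (q : ptR) (t2 : R) : R :=
  real (Glb_Rbar (fun L => exists (x : nat -> R -> R) (tt : R -> R),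
     C1_curve (dimn ns) x tt /\
     (forall k, (k < dimn ns)%nat -> x k 0 = p k /\ x k 1 = q k) /\
     tt 0 = t1 /\ tt 1 = t2 /\
     L = curve_length ns als x tt)).

From Stdlib Require Import Reals List Lra Psatz Classical.
From Coquelicot Require Import Coquelicot.
Open Scope R_scope.

(* The upper bounds come from an explicit curve: rise vertically to a height
   M >= max(t1, t2) with |e^{-MA}(p - q)| <= 1, cross horizontally at height M
   (length <= 1), and descend.  Every curve is at least as long as the total
   variation of its height; this gives (2), and the lower bound in (1) for
   curves that climb to height t0.  A curve staying below t0 is handled by
   calibration: with a = alpha_1, xi = e^{-2 t0 A}(q - p) and
   u = a e^{a (t0 - t)} (<xi, x> - m), the function arcsinh(u) / a is the signed
   distance to a vertical geodesic in a hyperbolic plane of curvature -a^2,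
   onto which {t <= t0} projects 1-Lipschitz; choosing m halfway between the
   endpoint values, its increase along the curve is at least
   (t0 - t1) + (t0 - t2) + 2 ln(a) / a.  So C = 1 + 2 |ln alpha_1| / alpha_1. *)

Lemma is_derive_RInt_continuous (g : R -> R) (a x : R) :
  (forall s, continuous g s) -> is_derive (fun y => RInt g a y) x (g x).
Proof.
  intros Hg. apply is_derive_RInt with (a := a); [|apply Hg].
  apply filter_forall. intros y. apply RInt_correct, ex_RInt_continuous.
  intros; apply Hg.
Qed.

(* By the mean value theorem, so unlike [is_RInt_derive] no continuity of [f] is needed. *)
Lemma increment_le_RInt (g F f : R -> R) (a b : R) : a <= b ->
  (forall s, continuous g s) ->
  (forall s, a <= s <= b -> is_derive F s (f s)) ->
  (forall s, a <= s <= b -> f s <= g s) ->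
  F b - F a <= RInt g a b.
Proof.
  intros Hab Hg HF Hfg.
  set (H := fun s => RInt g a s - F s).
  assert (HD : forall s, a <= s <= b -> is_derive H s (g s - f s)).
  { intros s Hs. apply (is_derive_minus (fun y => RInt g a y) F); auto.
    apply is_derive_RInt_continuous; auto. }
  destruct (MVT_gen H a b (fun s => g s - f s)) as [c [Hc Heq]];
    rewrite ?Rmin_left, ?Rmax_right in * by lra.
  - intros s Hs. apply HD; lra.
  - intros s Hs. apply continuity_pt_filterlim, (ex_derive_continuous (V := R_NormedModule)).
    eexists. apply HD; lra.
  - unfold H in Heq. rewrite RInt_point in Heq. unfold zero in Heq; simpl in Heq.
    assert (0 <= (g c - f c) * (b - a)) by (apply Rmult_le_pos; [specialize (Hfg c Hc)|]; lra).
    lra.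
Qed.

Lemma RInt_le_increment (g F f : R -> R) (a b : R) : a <= b ->
  (forall s, continuous g s) ->
  (forall s, a <= s <= b -> is_derive F s (f s)) ->
  (forall s, a <= s <= b -> g s <= f s) ->
  RInt g a b <= F b - F a.
Proof.
  intros Hab Hg HF Hgf.
  assert (H := increment_le_RInt (fun s => - g s) (fun s => - F s) (fun s => - f s) a b Hab).
  rewrite (RInt_opp g) in H.
  - unfold opp in H; simpl in H. enough (- F b - - F a <= - RInt g a b) by lra.
    apply H.
    + intros s. apply (continuous_opp g), Hg.
    + intros s Hs. apply (is_derive_opp F), HF, Hs.
    + intros s Hs. specialize (Hgf s Hs). lra.
  - apply ex_RInt_continuous. intros; apply Hg.
Qed.

Lemma Glb_Rbar_between (P : R -> Prop) (B L0 : R) :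
  P L0 -> (forall L, P L -> B <= L) -> B <= real (Glb_Rbar P) <= L0.
Proof.
  intros HL HB. destruct (Glb_Rbar_correct P) as [Hlb Hgr].
  assert (H1 : Rbar_le (Glb_Rbar P) (Finite L0)) by (apply Hlb; auto).
  assert (H2 : Rbar_le (Finite B) (Glb_Rbar P)) by (apply Hgr; intros x Hx; apply HB; auto).
  destruct (Glb_Rbar P); simpl in *; try contradiction; lra.
Qed.

Lemma sumk_ext n f g : (forall k, (k < n)%nat -> f k = g k) -> sumk n f = sumk n g.
Proof.
  induction n as [|n IH]; simpl; intros H; auto.
  rewrite IH by (intros; apply H; lia). rewrite H by lia. reflexivity.
Qed.

Lemma sumk_le n f g : (forall k, (k < n)%nat -> f k <= g k) -> sumk n f <= sumk n g.
Proof.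
  induction n as [|n IH]; simpl; intros H; [lra|].
  assert (f n <= g n) by (apply H; lia).
  assert (sumk n f <= sumk n g) by (apply IH; intros; apply H; lia). lra.
Qed.

Lemma sumk_nonneg n f : (forall k, (k < n)%nat -> 0 <= f k) -> 0 <= sumk n f.
Proof.
  intros H. apply Rle_trans with (sumk n (fun _ => 0)); [|apply sumk_le, H].
  clear H. induction n; simpl; lra.
Qed.

Lemma sumk_sq_nonneg n f : 0 <= sumk n (fun k => f k ^ 2).
Proof. apply sumk_nonneg. intros; apply pow2_ge_0. Qed.

Lemma sumk_scal_l n c f : sumk n (fun k => c * f k) = c * sumk n f.
Proof. induction n; simpl; [|rewrite IHn]; ring. Qed.

Lemma sumk_minus n f g : sumk n (fun k => f k - g k) = sumk n f - sumk n g.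
Proof. induction n; simpl; [|rewrite IHn]; ring. Qed.

Lemma is_derive_sumk n (f : nat -> R -> R) df s :
  (forall k, (k < n)%nat -> is_derive (f k) s (df k)) ->
  is_derive (fun y => sumk n (fun k => f k y)) s (sumk n df).
Proof.
  induction n as [|n IH]; simpl; intros H.
  - apply (is_derive_const 0).
  - apply (is_derive_plus (fun y => sumk n (fun k => f k y)) (f n)); [apply IH|];
      intros; apply H; lia.
Qed.

Lemma continuous_sumk n (f : nat -> R -> R) s :
  (forall k, (k < n)%nat -> continuous (f k) s) ->
  continuous (fun y => sumk n (fun k => f k y)) s.
Proof.
  induction n as [|n IH]; simpl; intros H.
  - apply continuous_const.
  - apply (continuous_plus (fun y => sumk n (fun k => f k y)) (f n)); [apply IH|];
      intros; apply H; lia.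
Qed.

Lemma sumk_Cauchy_Schwarz n a b :
  (sumk n (fun k => a k * b k)) ^ 2 <= sumk n (fun k => a k ^ 2) * sumk n (fun k => b k ^ 2).
Proof.
  induction n as [|n IH]; cbn [sumk]; [lra|].
  set (S := sumk n (fun k => a k * b k)) in *.
  set (A := sumk n (fun k => a k ^ 2)) in *. set (B := sumk n (fun k => b k ^ 2)) in *.
  assert (HA : 0 <= A) by apply sumk_sq_nonneg. assert (HB : 0 <= B) by apply sumk_sq_nonneg.
  assert (H : 2 * S * (a n * b n) <= A * b n ^ 2 + a n ^ 2 * B).
  { assert (0 <= A * b n ^ 2 + a n ^ 2 * B)
      by (apply Rplus_le_le_0_compat; apply Rmult_le_pos; auto; apply pow2_ge_0).
    apply Rsqr_incr_0_var; unfold Rsqr; [|auto].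
    assert (0 <= (A * b n ^ 2 - a n ^ 2 * B) ^ 2) by apply pow2_ge_0.
    assert (S ^ 2 * (a n * b n) ^ 2 <= A * B * (a n * b n) ^ 2)
      by (apply Rmult_le_compat_r; [apply pow2_ge_0 | exact IH]).
    nra. }
  nra.
Qed.

Lemma In_wt ns als k : length ns = length als -> (k < dimn ns)%nat -> In (wt ns als k) als.
Proof.
  revert als k. induction ns as [|n0 ns IH]; intros [|a als] k Hl Hk; simpl in *; try lia.
  destruct (Nat.ltb k n0) eqn:E; [now left|right].
  apply Nat.ltb_ge in E. apply IH; lia.
Qed.

Lemma strictly_increasing_hd_le l x : strictly_increasing l -> In x l -> hd 0 l <= x.
Proof.
  induction l as [|a [|b l] IH]; simpl; intros Hs Hx; [contradiction| |].
  - destruct Hx as [->|[]]. lra.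
  - destruct Hs as [Hab Hs]. destruct Hx as [->|Hx]; [lra|].
    specialize (IH Hs Hx). simpl in IH. lra.
Qed.

Lemma hd_le_wt ns als k : valid_data ns als -> (k < dimn ns)%nat -> hd 0 als <= wt ns als k.
Proof.
  intros (_ & Hl & _ & _ & Hs) Hk.
  apply strictly_increasing_hd_le; [exact Hs | apply In_wt; auto].
Qed.

Lemma hd_pos ns als : valid_data ns als -> 0 < hd 0 als.
Proof.
  intros (H1 & H2 & _ & Hpos & _). destruct als as [|a als]; simpl in *.
  - destruct ns; simpl in *; lia.
  - now inversion Hpos.
Qed.

Lemma exp_le_compat x y : x <= y -> exp x <= exp y.
Proof. intros [H|H]; [left; apply exp_increasing, H | right; rewrite H; reflexivity]. Qed.

Lemma normA_antitone ns als v t t' : valid_data ns als -> t <= t' ->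
  normA ns als t' v <= normA ns als t v.
Proof.
  intros Hv Ht. apply sqrt_le_1_alt, sumk_le. intros k Hk.
  assert (Hw : 0 < wt ns als k)
    by (pose proof (hd_pos ns als Hv); pose proof (hd_le_wt ns als k Hv Hk); lra).
  rewrite !Rpow_mult_distr. apply Rmult_le_compat_r; [apply pow2_ge_0|].
  apply pow_incr. split; [left; apply exp_pos|].
  apply exp_le_compat. nra.
Qed.

(* [step_density u = 6 max (0, u (1 - u))], so [smoothstep] is the C^1 step
   [3 u^2 - 2 u^3] on [0, 1], clamped to 0 on the left and 1 on the right. *)
Definition step_density (u : R) : R := 3 * (u * (1 - u) + Rabs (u * (1 - u))).
Definition smoothstep (u : R) : R := RInt step_density 0 u.

Lemma continuous_step_density u : continuous step_density u.
Proof.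
  assert (Hp : continuous (fun u => u * (1 - u)) u).
  { apply (continuous_mult (fun u => u) (fun u => 1 - u)); [apply continuous_id|].
    apply (continuous_minus (fun _ => 1) (fun u => u)); [apply continuous_const | apply continuous_id]. }
  apply (continuous_scal_r 3 (fun u => u * (1 - u) + Rabs (u * (1 - u)))).
  apply (continuous_plus (fun u => u * (1 - u)) (fun u => Rabs (u * (1 - u)))); auto.
  apply continuous_Rabs_comp, Hp.
Qed.

Lemma step_density_nonneg u : 0 <= step_density u.
Proof. unfold step_density. pose proof (Rle_abs (- (u * (1 - u)))). rewrite Rabs_Ropp in *. lra. Qed.

Lemma step_density_out u : u <= 0 \/ 1 <= u -> step_density u = 0.
Proof.
  intros H. unfold step_density. rewrite Rabs_left1 by (destruct H; nra). ring.
Qed.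

Lemma step_density_in u : 0 <= u <= 1 -> step_density u = 6 * u - 6 * u ^ 2.
Proof. intros H. unfold step_density. rewrite Rabs_pos_eq by nra. ring. Qed.

Lemma is_derive_smoothstep u : is_derive smoothstep u (step_density u).
Proof. apply is_derive_RInt_continuous, continuous_step_density. Qed.

Lemma RInt_step_density_out a b : a <= b -> b <= 0 \/ 1 <= a -> RInt step_density a b = 0.
Proof.
  intros Hab H. rewrite (RInt_ext _ (fun _ => 0)), RInt_const.
  - apply Rmult_0_r.
  - rewrite Rmin_left, Rmax_right by lra. intros x Hx. apply step_density_out. lra.
Qed.

Lemma smoothstep_le0 u : u <= 0 -> smoothstep u = 0.
Proof.
  intros H. unfold smoothstep. rewrite <- opp_RInt_swap.
  - rewrite RInt_step_density_out by lra. apply Ropp_0.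
  - apply ex_RInt_continuous. intros; apply continuous_step_density.
Qed.

Lemma smoothstep_ge1 u : 1 <= u -> smoothstep u = 1.
Proof.
  intros H. unfold smoothstep.
  assert (Hex : forall a b, ex_RInt step_density a b)
    by (intros; apply (ex_RInt_continuous (V := R_CompleteNormedModule));
        intros; apply continuous_step_density).
  rewrite <- (RInt_Chasles _ 0 1 u), (RInt_step_density_out 1 u) by (auto; lra).
  set (P := fun u => 3 * u ^ 2 - 2 * u ^ 3).
  rewrite (is_RInt_unique _ 0 1 (minus (P 1) (P 0))).
  - unfold P, minus, plus, opp; simpl; unfold plus; simpl. ring.
  - apply (is_RInt_derive P); rewrite Rmin_left, Rmax_right by lra; intros x Hx; unfold P.
    + rewrite step_density_in by lra. auto_derive; [auto|]. ring.
    + apply continuous_step_density.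
Qed.

(* [stage c] climbs from 0 to 1 while [s] runs over [[c/3, (c+1)/3]]. *)
Definition stage (c s : R) : R := smoothstep (3 * s - c).
Definition stage_speed (c s : R) : R := 3 * step_density (3 * s - c).

Lemma is_derive_stage c s : is_derive (stage c) s (stage_speed c s).
Proof.
  unfold stage, stage_speed.
  apply (is_derive_comp smoothstep (fun s => 3 * s - c)); [apply is_derive_smoothstep|].
  auto_derive; auto; ring.
Qed.

Lemma continuous_stage_speed c s : continuous (stage_speed c) s.
Proof.
  apply (continuous_scal_r 3 (fun s => step_density (3 * s - c))).
  apply (continuous_comp (fun s => 3 * s - c) step_density); [|apply continuous_step_density].
  apply (continuous_minus (fun s => 3 * s) (fun _ => c)); [|apply continuous_const].
  apply (continuous_mult (fun _ => 3) (fun s => s)); [apply continuous_const | apply continuous_id].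
Qed.

Lemma stage_speed_nonneg c s : 0 <= stage_speed c s.
Proof. unfold stage_speed. pose proof (step_density_nonneg (3 * s - c)). lra. Qed.

Lemma stage_before c s : 3 * s <= c -> stage c s = 0.
Proof. intros; apply smoothstep_le0; lra. Qed.

Lemma stage_after c s : c + 1 <= 3 * s -> stage c s = 1.
Proof. intros; apply smoothstep_ge1; lra. Qed.

Lemma stage_at_0 c : 0 <= c -> stage c 0 = 0.
Proof. intros; apply stage_before; lra. Qed.

Lemma stage_at_1 c : c <= 2 -> stage c 1 = 1.
Proof. intros; apply stage_after; lra. Qed.

Lemma stage_speed_out c s : 3 * s <= c \/ c + 1 <= 3 * s -> stage_speed c s = 0.
Proof. intros H. unfold stage_speed. rewrite step_density_out by lra. ring. Qed.

Definition speed ns als (x : nat -> R -> R) (tt : R -> R) (s : R) : R :=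
  sqrt (sumk (dimn ns) (fun k => (exp (- tt s * wt ns als k) * Derive (x k) s) ^ 2)
        + (Derive tt s) ^ 2).

Lemma curve_length_speed ns als x tt : curve_length ns als x tt = RInt (speed ns als x tt) 0 1.
Proof. reflexivity. Qed.

Lemma continuous_pow2 (f : R -> R) s : continuous f s -> continuous (fun y => f y ^ 2) s.
Proof.
  intros H. apply (continuous_ext (fun y => f y * f y)); [intros; simpl; ring|].
  apply (continuous_mult f f); auto.
Qed.

Lemma continuous_speed ns als x tt s : C1_curve (dimn ns) x tt -> continuous (speed ns als x tt) s.
Proof.
  intros [Hx Ht]. apply continuous_sqrt_comp.
  apply (continuous_plus
           (fun s => sumk (dimn ns) (fun k => (exp (- tt s * wt ns als k) * Derive (x k) s) ^ 2))
                         (fun s => Derive tt s ^ 2)); [|apply continuous_pow2, Ht].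
  apply (continuous_sumk _ (fun k s => (exp (- tt s * wt ns als k) * Derive (x k) s) ^ 2)).
  intros k Hk. apply (continuous_pow2 (fun s => exp (- tt s * wt ns als k) * Derive (x k) s)).
  apply (continuous_mult (fun s => exp (- tt s * wt ns als k)) (fun s => Derive (x k) s));
    [|apply Hx, Hk].
  apply continuous_exp_comp.
  apply (continuous_ext (fun s => (- wt ns als k) * tt s)); [intros; simpl; ring|].
  apply (continuous_scal_r (- wt ns als k) tt).
  apply (ex_derive_continuous (V := R_NormedModule)), Ht.
Qed.

Lemma le_sqrt_of_sq c X : c ^ 2 <= X -> c <= sqrt X.
Proof.
  intros H. destruct (Rle_or_lt c 0); [pose proof (sqrt_pos X); lra|].
  rewrite <- (sqrt_pow2 c) by lra. apply sqrt_le_1_alt, H.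
Qed.

Lemma abs_height_speed_le ns als x tt s : Rabs (Derive tt s) <= speed ns als x tt s.
Proof.
  apply le_sqrt_of_sq. rewrite pow2_abs.
  pose proof (sumk_sq_nonneg (dimn ns) (fun k => exp (- tt s * wt ns als k) * Derive (x k) s)).
  lra.
Qed.

Lemma sqrt_plus_le a b : 0 <= a -> 0 <= b -> sqrt (a + b) <= sqrt a + sqrt b.
Proof.
  intros Ha Hb. pose proof (sqrt_pos a). pose proof (sqrt_pos b).
  rewrite <- (sqrt_pow2 (sqrt a + sqrt b)) by lra. apply sqrt_le_1_alt.
  pose proof (sqrt_sqrt a Ha). pose proof (sqrt_sqrt b Hb). nra.
Qed.

Section Detour.
Variables (ns : list nat) (als : list R) (p q : ptR) (t1 t2 M : R).

Definition detour_x (k : nat) (s : R) : R := p k + (q k - p k) * stage 1 s.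
Definition detour_t (s : R) : R := t1 + (M - t1) * stage 0 s - (M - t2) * stage 2 s.

Lemma is_derive_detour_x k s : is_derive (detour_x k) s ((q k - p k) * stage_speed 1 s).
Proof.
  unfold detour_x. auto_derive; [eexists; apply is_derive_stage|].
  replace (Derive (fun s => stage 1 s) s) with (stage_speed 1 s)
    by (symmetry; apply is_derive_unique, is_derive_stage).
  ring.
Qed.

Definition detour_dt (s : R) : R := (M - t1) * stage_speed 0 s - (M - t2) * stage_speed 2 s.

Lemma is_derive_detour_t s : is_derive detour_t s (detour_dt s).
Proof.
  unfold detour_t, detour_dt. auto_derive; [repeat split; eexists; apply is_derive_stage|].
  replace (Derive (fun s => stage 0 s) s) with (stage_speed 0 s)
    by (symmetry; apply is_derive_unique, is_derive_stage).
  replace (Derive (fun s => stage 2 s) s) with (stage_speed 2 s)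
    by (symmetry; apply is_derive_unique, is_derive_stage).
  ring.
Qed.

Lemma detour_C1 : C1_curve (dimn ns) detour_x detour_t.
Proof.
  split; [intros k Hk|]; intros s; split.
  - eexists; apply is_derive_detour_x.
  - apply (continuous_ext (fun s => (q k - p k) * stage_speed 1 s));
      [intros; symmetry; apply is_derive_unique, is_derive_detour_x|].
    apply (continuous_scal_r (q k - p k) (stage_speed 1)), continuous_stage_speed.
  - eexists; apply is_derive_detour_t.
  - apply (continuous_ext detour_dt); [intros; symmetry; apply is_derive_unique, is_derive_detour_t|].
    apply (continuous_minus (fun s => (M - t1) * stage_speed 0 s) (fun s => (M - t2) * stage_speed 2 s));
      [apply (continuous_scal_r (M - t1) (stage_speed 0)) |
       apply (continuous_scal_r (M - t2) (stage_speed 2))];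
      apply continuous_stage_speed.
Qed.

Lemma detour_x_ends k : detour_x k 0 = p k /\ detour_x k 1 = q k.
Proof. unfold detour_x. rewrite stage_at_0, stage_at_1 by lra. split; ring. Qed.

Lemma detour_t_ends : detour_t 0 = t1 /\ detour_t 1 = t2.
Proof. unfold detour_t. rewrite !stage_at_0, !stage_at_1 by lra. split; ring. Qed.

Hypothesis normA_M : normA ns als M (fun k => p k - q k) <= 1.
Hypothesis t1_le_M : t1 <= M.
Hypothesis t2_le_M : t2 <= M.

Lemma speed_detour_le s :
  speed ns als detour_x detour_t s
  <= (M - t1) * stage_speed 0 s + stage_speed 1 s + (M - t2) * stage_speed 2 s.
Proof.
  unfold speed. rewrite (is_derive_unique _ _ _ (is_derive_detour_t s)).
  set (B := stage_speed 1 s). assert (HB : 0 <= B) by apply stage_speed_nonneg.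
  rewrite (sumk_ext _ _ (fun k => B ^ 2 * (exp (- detour_t s * wt ns als k) * (p k - q k)) ^ 2))
    by (intros k Hk; rewrite (is_derive_unique _ _ _ (is_derive_detour_x k s)); fold B; ring).
  rewrite sumk_scal_l.
  set (X := sumk (dimn ns) (fun k => (exp (- detour_t s * wt ns als k) * (p k - q k)) ^ 2)).
  assert (HX : 0 <= X) by apply sumk_sq_nonneg.
  eapply Rle_trans; [apply sqrt_plus_le; [apply Rmult_le_pos; auto|]; apply pow2_ge_0|].
  rewrite sqrt_mult, sqrt_pow2 by (auto; apply pow2_ge_0).
  replace (sqrt (detour_dt s ^ 2)) with (Rabs (detour_dt s))
    by (rewrite <- sqrt_Rsqr_abs, Rsqr_pow2; reflexivity).
  assert (HBX : B * sqrt X <= B).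
  { destruct (Rle_or_lt (3 * s) 1) as [Hs|Hs];
      [unfold B; rewrite stage_speed_out by lra; lra|].
    destruct (Rle_or_lt 2 (3 * s)) as [Hs'|Hs'];
      [unfold B; rewrite stage_speed_out by lra; lra|].
    assert (Ht : detour_t s = M)
      by (unfold detour_t; rewrite stage_after, stage_before by lra; ring).
    unfold X. rewrite Ht. rewrite <- (Rmult_1_r B) at 2. apply Rmult_le_compat_l; auto. }
  pose proof (stage_speed_nonneg 0 s). pose proof (stage_speed_nonneg 2 s).
  assert (Rabs (detour_dt s) <= (M - t1) * stage_speed 0 s + (M - t2) * stage_speed 2 s).
  { unfold detour_dt. apply Rabs_le. split; nra. }
  lra.
Qed.

Lemma detour_length_le :
  curve_length ns als detour_x detour_t <= (M - t1) + (M - t2) + 1.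
Proof.
  rewrite curve_length_speed.
  set (F := fun s => (M - t1) * stage 0 s + stage 1 s + (M - t2) * stage 2 s).
  replace ((M - t1) + (M - t2) + 1) with (F 1 - F 0)
    by (unfold F; rewrite !stage_at_0, !stage_at_1 by lra; ring).
  apply (RInt_le_increment _ F (fun s => (M - t1) * stage_speed 0 s + stage_speed 1 s
                                         + (M - t2) * stage_speed 2 s)); [lra | | |].
  - intros; apply continuous_speed, detour_C1.
  - intros s _. unfold F.
    apply (is_derive_plus (fun s => (M - t1) * stage 0 s + stage 1 s) (fun s => (M - t2) * stage 2 s)).
    + apply (is_derive_plus (fun s => (M - t1) * stage 0 s) (stage 1)).
      * apply is_derive_scal, is_derive_stage.
      * apply is_derive_stage.
    + apply is_derive_scal, is_derive_stage.
  - intros s _. apply speed_detour_le.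
Qed.
End Detour.

Section Height.
Variables (ns : list nat) (als : list R) (x : nat -> R -> R) (tt : R -> R).
Hypothesis curve_C1 : C1_curve (dimn ns) x tt.

Lemma height_rise_le a b : a <= b -> tt b - tt a <= RInt (speed ns als x tt) a b.
Proof.
  intros Hab. apply (increment_le_RInt _ tt (Derive tt)); auto.
  - intros; apply continuous_speed, curve_C1.
  - intros s _. apply Derive_correct, curve_C1.
  - intros s _. eapply Rle_trans; [apply Rle_abs | apply abs_height_speed_le].
Qed.

Lemma height_drop_le a b : a <= b -> tt a - tt b <= RInt (speed ns als x tt) a b.
Proof.
  intros Hab. replace (tt a - tt b) with ((fun s => - tt s) b - (fun s => - tt s) a) by ring.
  apply (increment_le_RInt _ (fun s => - tt s) (fun s => - Derive tt s)); auto.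
  - intros; apply continuous_speed, curve_C1.
  - intros s _. apply (is_derive_opp tt), Derive_correct, curve_C1.
  - intros s _. eapply Rle_trans; [|apply abs_height_speed_le].
    rewrite <- Rabs_Ropp. apply Rle_abs.
Qed.

Lemma curve_length_ge_height_diff : Rabs (tt 0 - tt 1) <= curve_length ns als x tt.
Proof.
  pose proof (height_rise_le 0 1 ltac:(lra)). pose proof (height_drop_le 0 1 ltac:(lra)).
  apply Rabs_le. rewrite curve_length_speed. lra.
Qed.

Lemma curve_length_ge_up_down s0 : 0 <= s0 <= 1 ->
  (tt s0 - tt 0) + (tt s0 - tt 1) <= curve_length ns als x tt.
Proof.
  intros Hs. rewrite curve_length_speed.
  assert (Hex : forall a b, ex_RInt (speed ns als x tt) a b)
    by (intros; apply (ex_RInt_continuous (V := R_CompleteNormedModule));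
        intros; apply continuous_speed, curve_C1).
  rewrite <- (RInt_Chasles _ 0 s0 1) by apply Hex.
  pose proof (height_rise_le 0 s0 ltac:(lra)). pose proof (height_drop_le s0 1 ltac:(lra)).
  unfold plus; simpl. lra.
Qed.
End Height.

Lemma arcsinh_opp z : arcsinh (- z) = - arcsinh z.
Proof.
  rewrite <- (sinh_arcsinh z) at 1.
  replace (- sinh (arcsinh z)) with (sinh (- arcsinh z))
    by (unfold sinh; rewrite Ropp_involutive; field).
  apply arcsinh_sinh.
Qed.

Lemma ln_le_arcsinh_half z : 0 < z -> ln z <= arcsinh (z / 2).
Proof.
  intros Hz. apply ln_le; [exact Hz|].
  enough (z / 2 <= sqrt ((z / 2) ^ 2 + 1)) by lra.
  apply le_sqrt_of_sq. lra.
Qed.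

Lemma is_derive_arcsinh z : is_derive arcsinh z (/ sqrt (z ^ 2 + 1)).
Proof. apply is_derive_Reals, derivable_pt_lim_arcsinh. Qed.

Lemma is_derive_calibration (tt sg : R -> R) a t0 m s : 0 < a ->
  ex_derive tt s -> ex_derive sg s ->
  is_derive (fun s => arcsinh (a * exp (a * (t0 - tt s)) * (sg s - m)) / a) s
    ((exp (a * (t0 - tt s)) * Derive sg s
      - a * exp (a * (t0 - tt s)) * (sg s - m) * Derive tt s)
     / sqrt ((a * exp (a * (t0 - tt s)) * (sg s - m)) ^ 2 + 1)).
Proof.
  intros Ha Ht Hs.
  set (u := fun s => a * exp (a * (t0 - tt s)) * (sg s - m)).
  assert (Hu : is_derive u s (a * (exp (a * (t0 - tt s)) * Derive sg s - u s * Derive tt s))).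
  { unfold u. auto_derive; [tauto|]. replace (t0 + - tt s) with (t0 - tt s) by ring.
    change (fun x => tt x) with tt. change (fun x => sg x) with sg. ring. }
  assert (Hc := is_derive_comp arcsinh u s _ _ (is_derive_arcsinh (u s)) Hu).
  assert (Hq : 0 < sqrt (u s ^ 2 + 1)) by (apply sqrt_lt_R0; pose proof (pow2_ge_0 (u s)); lra).
  apply (is_derive_ext (fun s => / a * arcsinh (u s))); [intros; apply Rmult_comm|].
  change (is_derive (fun s => / a * arcsinh (u s)) s
            ((exp (a * (t0 - tt s)) * Derive sg s - u s * Derive tt s) / sqrt (u s ^ 2 + 1))).
  replace ((exp (a * (t0 - tt s)) * Derive sg s - u s * Derive tt s) / sqrt (u s ^ 2 + 1))
    with (/ a * scal (a * (exp (a * (t0 - tt s)) * Derive sg s - u s * Derive tt s))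
                     (/ sqrt (u s ^ 2 + 1)))
    by (change (scal ?x ?y) with (x * y); field; split; lra).
  apply is_derive_scal, Hc.
Qed.

Lemma calibration_le_speed c h u d : c ^ 2 <= h ->
  (c - u * d) / sqrt (u ^ 2 + 1) <= sqrt (h + d ^ 2).
Proof.
  intros Hc. pose proof (pow2_ge_0 c). pose proof (pow2_ge_0 u). pose proof (pow2_ge_0 d).
  assert (HQ : 0 < sqrt (u ^ 2 + 1)) by (apply sqrt_lt_R0; lra).
  apply (Rmult_le_reg_r (sqrt (u ^ 2 + 1))); [exact HQ|].
  replace ((c - u * d) / sqrt (u ^ 2 + 1) * sqrt (u ^ 2 + 1)) with (c - u * d) by (field; lra).
  rewrite <- sqrt_mult by lra. apply le_sqrt_of_sq.
  pose proof (pow2_ge_0 (c * u + d)). nra.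
Qed.

Lemma calibration_gradient_sq_le n (w v y : nat -> R) a t0 t :
  (forall k, (k < n)%nat -> a <= w k) -> t <= t0 ->
  sumk n (fun k => (exp (- t0 * w k) * v k) ^ 2) = 1 ->
  (exp (a * (t0 - t)) * sumk n (fun k => exp (- t0 * w k) ^ 2 * v k * y k)) ^ 2
  <= sumk n (fun k => (exp (- t * w k) * y k) ^ 2).
Proof.
  (* The weight e^{a (t0 - t)} e^{-2 t0 w_k} splits as
     damp_k * e^{-t0 w_k} * e^{-t w_k} with damp_k <= 1 because a <= w_k and
     t <= t0; then Cauchy-Schwarz. *)
  intros Hw Ht Hv.
  set (damp := fun k => exp ((w k - a) * (t - t0))).
  rewrite <- sumk_scal_l.
  rewrite (sumk_ext _ _ (fun k => (damp k * (exp (- t0 * w k) * v k)) * (exp (- t * w k) * y k))).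
  2: { intros k _. unfold damp. simpl. rewrite Rmult_1_r.
       replace (exp (a * (t0 - t)) * (exp (- t0 * w k) * exp (- t0 * w k) * v k * y k))
         with ((exp (a * (t0 - t)) * exp (- t0 * w k) * exp (- t0 * w k)) * v k * y k) by ring.
       replace (exp ((w k - a) * (t - t0)) * (exp (- t0 * w k) * v k) * (exp (- t * w k) * y k))
         with ((exp ((w k - a) * (t - t0)) * exp (- t0 * w k) * exp (- t * w k)) * v k * y k) by ring.
       rewrite <- !exp_plus. do 3 f_equal. ring. }
  eapply Rle_trans; [apply sumk_Cauchy_Schwarz|].
  rewrite <- (Rmult_1_l (sumk n (fun k => (exp (- t * w k) * y k) ^ 2))) at 1.
  apply Rmult_le_compat_r; [apply sumk_sq_nonneg|].
  rewrite <- Hv. apply sumk_le. intros k Hk.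
  assert (Hd : 0 < damp k <= 1).
  { split; [apply exp_pos|]. rewrite <- exp_0. apply exp_le_compat.
    specialize (Hw k Hk). nra. }
  rewrite Rpow_mult_distr. pose proof (pow2_ge_0 (exp (- t0 * w k) * v k)).
  assert (damp k ^ 2 <= 1) by nra. nra.
Qed.

Section Calibration.
Variables (ns : list nat) (als : list R) (p q : ptR) (t0 : R) (x : nat -> R -> R) (tt : R -> R).
Hypothesis data_valid : valid_data ns als.
Hypothesis De_t0 : De_is ns als p q t0.
Hypothesis curve_C1 : C1_curve (dimn ns) x tt.
Hypothesis curve_ends : forall k, (k < dimn ns)%nat -> x k 0 = p k /\ x k 1 = q k.
Hypothesis curve_below : forall s, 0 <= s <= 1 -> tt s <= t0.

Let a := hd 0 als.
Let n := dimn ns.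
Let w := wt ns als.
Let sg s := sumk n (fun k => exp (- t0 * w k) ^ 2 * (q k - p k) * x k s).
Let m := (sg 0 + sg 1) / 2.
Let u s := a * exp (a * (t0 - tt s)) * (sg s - m).

Lemma De_sum_sq : sumk n (fun k => (exp (- t0 * w k) * (q k - p k)) ^ 2) = 1.
Proof.
  unfold De_is, normA in De_t0.
  pose proof (sqrt_sqrt _ (sumk_sq_nonneg n (fun k => exp (- t0 * w k) * (p k - q k)))) as HS.
  unfold n, w in HS. rewrite De_t0 in HS.
  transitivity (sumk n (fun k => (exp (- t0 * w k) * (p k - q k)) ^ 2));
    [apply sumk_ext; intros; ring | unfold n, w; lra].
Qed.

Lemma sg_increment : sg 1 - sg 0 = 1.
Proof.
  unfold sg. rewrite <- sumk_minus. transitivity (sumk n (fun k => (exp (- t0 * w k) * (q k - p k)) ^ 2)).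
  - apply sumk_ext. intros k Hk. destruct (curve_ends k Hk) as [-> ->]. ring.
  - apply De_sum_sq.
Qed.

Lemma is_derive_sg s :
  is_derive sg s (sumk n (fun k => exp (- t0 * w k) ^ 2 * (q k - p k) * Derive (x k) s)).
Proof.
  apply (is_derive_sumk n (fun k s => exp (- t0 * w k) ^ 2 * (q k - p k) * x k s)).
  intros k Hk. apply is_derive_scal, Derive_correct, curve_C1, Hk.
Qed.

Lemma calibration_increment_le :
  arcsinh (u 1) / a - arcsinh (u 0) / a <= curve_length ns als x tt.
Proof.
  pose proof (hd_pos ns als data_valid) as Ha. fold a in Ha.
  rewrite curve_length_speed.
  apply (increment_le_RInt _ (fun s => arcsinh (u s) / a)
          (fun s => (exp (a * (t0 - tt s)) * Derive sg s - u s * Derive tt s) / sqrt (u s ^ 2 + 1)));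
    [lra | intros; apply continuous_speed, curve_C1 | |].
  - intros s _. apply is_derive_calibration; [exact Ha | apply curve_C1 | eexists; apply is_derive_sg].
  - intros s Hs. rewrite (is_derive_unique _ _ _ (is_derive_sg s)).
    apply calibration_le_speed, calibration_gradient_sq_le; [|apply curve_below, Hs|apply De_sum_sq].
    intros k Hk. apply hd_le_wt; auto.
Qed.

Lemma curve_length_ge_calibrated :
  (t0 - tt 0) + (t0 - tt 1) + 2 * ln a / a <= curve_length ns als x tt.
Proof.
  pose proof (hd_pos ns als data_valid) as Ha. fold a in Ha.
  eapply Rle_trans; [|apply calibration_increment_le].
  assert (Hu1 : u 1 = a * exp (a * (t0 - tt 1)) / 2)
    by (unfold u; replace (sg 1 - m) with (/ 2) by (unfold m; pose proof sg_increment; lra); field).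
  assert (Hu0 : u 0 = - (a * exp (a * (t0 - tt 0)) / 2))
    by (unfold u; replace (sg 0 - m) with (- / 2) by (unfold m; pose proof sg_increment; lra); field).
  rewrite Hu1, Hu0, arcsinh_opp.
  assert (Hln : forall t, ln (a * exp (a * (t0 - t))) <= arcsinh (a * exp (a * (t0 - t)) / 2)).
  { intros t. apply ln_le_arcsinh_half. pose proof (exp_pos (a * (t0 - t))). nra. }
  pose proof (Hln (tt 0)) as H0. pose proof (Hln (tt 1)) as H1.
  rewrite ln_mult, ln_exp in H0, H1 by (auto; apply exp_pos).
  set (A0 := arcsinh (a * exp (a * (t0 - tt 0)) / 2)) in *.
  set (A1 := arcsinh (a * exp (a * (t0 - tt 1)) / 2)) in *.
  apply (Rmult_le_reg_r a); [exact Ha|].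
  replace (((t0 - tt 0) + (t0 - tt 1) + 2 * ln a / a) * a)
    with ((ln a + a * (t0 - tt 0)) + (ln a + a * (t0 - tt 1))) by (field; lra).
  replace ((A1 / a - - A0 / a) * a) with (A0 + A1) by (field; lra).
  lra.
Qed.
End Calibration.

Definition admissible_length ns als (p : ptR) t1 (q : ptR) t2 (L : R) : Prop :=
  exists (x : nat -> R -> R) (tt : R -> R),
    C1_curve (dimn ns) x tt /\
    (forall k, (k < dimn ns)%nat -> x k 0 = p k /\ x k 1 = q k) /\
    tt 0 = t1 /\ tt 1 = t2 /\ L = curve_length ns als x tt.

Lemma dist_GA_Glb ns als p t1 q t2 :
  dist_GA ns als p t1 q t2 = real (Glb_Rbar (admissible_length ns als p t1 q t2)).
Proof. reflexivity. Qed.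

Lemma admissible_detour ns als p q t1 t2 M :
  normA ns als M (fun k => p k - q k) <= 1 -> t1 <= M -> t2 <= M ->
  exists L, admissible_length ns als p t1 q t2 L /\ L <= (M - t1) + (M - t2) + 1.
Proof.
  intros HN H1 H2. eexists. split; [|apply detour_length_le; eauto].
  exists (detour_x p q), (detour_t t1 t2 M).
  destruct (detour_t_ends t1 t2 M) as [E0 E1].
  split; [apply detour_C1|]. split; [intros k _; apply detour_x_ends|]. auto.
Qed.

Lemma dist_GA_low ns als p q t0 t1 t2 : valid_data ns als -> De_is ns als p q t0 ->
  t1 < t0 -> t2 < t0 ->
  Rabs (dist_GA ns als p t1 q t2 - (t0 - t1) - (t0 - t2)) <= 1 + 2 * Rabs (ln (hd 0 als)) / hd 0 als.
Proof.
  intros Hv HDe H1 H2.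
  set (a := hd 0 als). assert (Ha : 0 < a) by apply (hd_pos ns als Hv).
  assert (Habs_div : 0 <= Rabs (ln a) / a)
    by (apply Rmult_le_pos; [apply Rabs_pos | left; apply Rinv_0_lt_compat, Ha]).
  assert (Hln_div : - (Rabs (ln a) / a) <= ln a / a).
  { unfold Rdiv. rewrite Ropp_mult_distr_l.
    apply Rmult_le_compat_r; [left; apply Rinv_0_lt_compat, Ha|].
    pose proof (Rle_abs (- ln a)). rewrite Rabs_Ropp in *. lra. }
  destruct (admissible_detour ns als p q t1 t2 t0) as [L0 [HL0 HL0le]];
    [unfold De_is in HDe; lra | lra | lra |].
  destruct (Glb_Rbar_between _ ((t0 - t1) + (t0 - t2) - 2 * (Rabs (ln a) / a)) _ HL0) as [Hlow Hup].
  - intros L (x & tt & HC & Hend & <- & <- & ->).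
    destruct (classic (exists s0, 0 <= s0 <= 1 /\ t0 <= tt s0)) as [[s0 [Hs Hts]]|Hbelow].
    + pose proof (curve_length_ge_up_down ns als x tt HC s0 Hs). lra.
    + assert (Hb : forall s, 0 <= s <= 1 -> tt s <= t0)
        by (intros s Hs; apply Rnot_lt_le; intros Hlt; apply Hbelow; exists s; split; [|left]; auto).
      pose proof (curve_length_ge_calibrated ns als p q t0 x tt Hv HDe HC Hend Hb) as Hcal.
      fold a in Hcal. unfold Rdiv in *. lra.
  - rewrite dist_GA_Glb. apply Rabs_le. fold a. unfold Rdiv in *. lra.
Qed.

Lemma dist_GA_high ns als p q t0 t1 t2 : valid_data ns als -> De_is ns als p q t0 ->
  t1 >= t0 \/ t2 >= t0 ->
  Rabs (t1 - t2) <= dist_GA ns als p t1 q t2 <= Rabs (t1 - t2) + 1.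
Proof.
  intros Hv HDe Ht.
  set (M := Rmax t1 t2).
  assert (H1 : t1 <= M) by apply Rmax_l. assert (H2 : t2 <= M) by apply Rmax_r.
  assert (HM : (M - t1) + (M - t2) = Rabs (t1 - t2))
    by (unfold M, Rmax, Rabs; destruct (Rle_dec t1 t2), (Rcase_abs (t1 - t2)); lra).
  assert (HN : normA ns als M (fun k => p k - q k) <= 1)
    by (rewrite <- HDe; apply normA_antitone; [exact Hv | destruct Ht; lra]).
  destruct (admissible_detour ns als p q t1 t2 M HN H1 H2) as [L0 [HL0 HL0le]].
  rewrite dist_GA_Glb.
  destruct (Glb_Rbar_between _ (Rabs (t1 - t2)) _ HL0) as [Hlow Hup]; [|lra].
  intros L (x & tt & HC & _ & <- & <- & ->). apply curve_length_ge_height_diff, HC.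
Qed.

Theorem lemma6p3 :
  forall a1 ar : R, exists C : R,
  forall (ns : list nat) (als : list R),
    valid_data ns als ->
    hd 0 als = a1 -> last als 0 = ar ->
  forall (p q : ptR) (t0 t1 t2 : R),
    (exists k, (k < dimn ns)%nat /\ p k <> q k) ->
    De_is ns als p q t0 ->
    ((t1 < t0 -> t2 < t0 ->
        Rabs (dist_GA ns als p t1 q t2 - (t0 - t1) - (t0 - t2)) <= C) /\
     ((t1 >= t0 \/ t2 >= t0) ->
        Rabs (t1 - t2) <= dist_GA ns als p t1 q t2 <= Rabs (t1 - t2) + 1)).
Proof.
  intros a1 ar. exists (1 + 2 * Rabs (ln a1) / a1).
  intros ns als Hv Ha1 _ p q t0 t1 t2 _ HDe. subst a1. split.
  - apply dist_GA_low; assumption.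
  - apply dist_GA_high; assumption.
Qed.
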